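(* Let $a,\omega_1,\omega_2,\mu\in\mathbb{R}$ with $a\neq0$, and on $T^*\mathbb{R}^2$ with coordinates $(p_x,p_y,x,y)$ let \[H_{\mathrm{KdV}_5}=\tfrac12(p_x^2+p_y^2)+\tfrac12(\omega_1x^2+\omega_2y^2)+axy^2+2ax^3+\tfrac{\mu}{2y^2},\] \[K_{\mathrm{KdV}_5}=4ay\,p_xp_y+(4\omega_2-\omega_1-4ax)\Bigl(p_y^2+\tfrac{\mu}{y^2}\Bigr)+a^2y^4+4a^2x^2y^2+4a\omega_2xy^2+\omega_2(4\omega_2-\omega_1)y^2.\] Consider new variables $(P_1,P_2,X,Y)$, on an open set where $XY<0$ and $X\neq Y$, related to the old ones by \[x=\tfrac{2X+2Y-\omega_1+4\omega_2}{4a},\quad y=\tfrac{\sqrt{-XY}}{a},\quad p_x=2a\,\tfrac{XP_1-YP_2}{X-Y},\quad p_y=2a\sqrt{-XY}\,\tfrac{P_1-P_2}{X-Y}.\] Then $p_x\,dx+p_y\,dy=P_1\,dX+P_2\,dY$ (so the change of variables is canonical), and, with \[\Phi(\xi,\pi)=\frac{4\xi^5+(-4\omega_1+24\omega_2)\xi^4+(\omega_1-4\omega_2)(\omega_1-12\omega_2)\xi^3+\bigl(32a^4\pi^2+2\omega_1^2\omega_2-16\omega_1\omega_2^2+32\omega_2^3\bigr)\xi^2+8\mu a^4}{16\xi a^2},\] one has \[H_{\mathrm{KdV}_5}=\frac{\Phi(X,P_1)-\Phi(Y,P_2)}{X-Y},\qquad K_{\mathrm{KdV}_5}=\frac{4X\,\Phi(Y,P_2)-4Y\,\Phi(X,P_1)}{X-Y}.\]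 Consequently, on the common level set $H_{\mathrm{KdV}_5}=E$, $K_{\mathrm{KdV}_5}=K$ the separated relations $\Phi(X,P_1)-EX-\frac K4=0$ and $\Phi(Y,P_2)-EY-\frac K4=0$ hold. *)

From Stdlib Require Import Reals.
From Coquelicot Require Import Coquelicot.
Open Scope R_scope.

Definition H_KdV5 (a w1 w2 mu px py x y : R) : R :=
  / 2 * (px ^ 2 + py ^ 2) + / 2 * (w1 * x ^ 2 + w2 * y ^ 2)
  + a * x * y ^ 2 + 2 * a * x ^ 3 + mu / (2 * y ^ 2).

Definition K_KdV5 (a w1 w2 mu px py x y : R) : R :=
  4 * a * y * px * py + (4 * w2 - w1 - 4 * a * x) * (py ^ 2 + mu / y ^ 2)
  + a ^ 2 * y ^ 4 + 4 * a ^ 2 * x ^ 2 * y ^ 2 + 4 * a * w2 * x * y ^ 2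
  + w2 * (4 * w2 - w1) * y ^ 2.

Definition Phi (a w1 w2 mu xi p : R) : R :=
  (4 * xi ^ 5 + (- 4 * w1 + 24 * w2) * xi ^ 4
   + (w1 - 4 * w2) * (w1 - 12 * w2) * xi ^ 3
   + (32 * a ^ 4 * p ^ 2 + 2 * w1 ^ 2 * w2 - 16 * w1 * w2 ^ 2 + 32 * w2 ^ 3) * xi ^ 2
   + 8 * mu * a ^ 4) / (16 * xi * a ^ 2).

Definition x_of (a w1 w2 X Y : R) : R := (2 * X + 2 * Y - w1 + 4 * w2) / (4 * a).
Definition y_of (a X Y : R) : R := sqrt (- (X * Y)) / a.
Definition px_of (a P1 P2 X Y : R) : R := 2 * a * ((X * P1 - Y * P2) / (X - Y)).
Definition py_of (a P1 P2 X Y : R) : R := 2 * a * sqrt (- (X * Y)) * ((P1 - P2) / (X - Y)).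

From Stdlib Require Import Reals Lra Psatz.
From Coquelicot Require Import Coquelicot.
Open Scope R_scope.

(* With s = sqrt(-XY) we have y = s/a and p_y = 2 a s (P1 - P2)/(X - Y), and
   y, p_y enter H and K only through y^2, p_y^2 and y p_y, i.e. through
   s^2 = -XY.  After eliminating s^2 both identities become rational
   identities in X, Y, P1, P2.  Canonicity is the computation
   dx/dX = 1/(2a), dy/dX = -Y/(2as), and the X <-> Y symmetry of the change of
   variables gives the second component.  Finally H and K are the Staeckel
   combinations of Phi(X, P1) and Phi(Y, P2), and inverting that 2x2 linear
   system gives the separated relations. *)

Lemma staeckel_separation (X Y A B E K : R) :
  X <> Y -> E = (A - B) / (X - Y) -> K = (4 * X * B - 4 * Y * A) / (X - Y) ->
  A - E * X - K / 4 = 0 /\ B - E * Y - K / 4 = 0.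
Proof.
intros HXY -> ->.
split; field; lra.
Qed.

Section ChangeOfVariables.

Variables (a w1 w2 : R).
Hypothesis Ha : a <> 0.

Lemma x_of_sym (X Y : R) : x_of a w1 w2 X Y = x_of a w1 w2 Y X.
Proof. unfold x_of; f_equal; ring. Qed.

Lemma y_of_sym (X Y : R) : y_of a X Y = y_of a Y X.
Proof. unfold y_of; rewrite Rmult_comm; reflexivity. Qed.

Lemma px_of_sym (P1 P2 X Y : R) : X <> Y -> px_of a P1 P2 X Y = px_of a P2 P1 Y X.
Proof. intros HXY; unfold px_of; field; lra. Qed.

Lemma py_of_sym (P1 P2 X Y : R) : X <> Y -> py_of a P1 P2 X Y = py_of a P2 P1 Y X.
Proof. intros HXY; unfold py_of; rewrite (Rmult_comm Y X); field; lra. Qed.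

Lemma is_derive_x_of_l (X Y : R) :
  is_derive (fun t => x_of a w1 w2 t Y) X (/ (2 * a)).
Proof. unfold x_of; auto_derive; [easy | field; exact Ha]. Qed.

Lemma is_derive_y_of_l (X Y : R) : X * Y < 0 ->
  is_derive (fun t => y_of a t Y) X (- Y / (2 * a * sqrt (- (X * Y)))).
Proof.
intros HXY.
assert (Hs : 0 < sqrt (- (X * Y))) by (apply sqrt_lt_R0; lra).
unfold y_of; auto_derive; [lra |].
field; split; lra.
Qed.

Lemma Derive_x_of_l (X Y : R) :
  Derive (fun t => x_of a w1 w2 t Y) X = / (2 * a).
Proof. exact (is_derive_unique _ _ _ (is_derive_x_of_l X Y)). Qed.

Lemma Derive_y_of_l (X Y : R) : X * Y < 0 ->
  Derive (fun t => y_of a t Y) X = - Y / (2 * a * sqrt (- (X * Y))).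
Proof. intros HXY; exact (is_derive_unique _ _ _ (is_derive_y_of_l X Y HXY)). Qed.

Lemma canonical_l (P1 P2 X Y : R) : X * Y < 0 -> X <> Y ->
  px_of a P1 P2 X Y * Derive (fun t => x_of a w1 w2 t Y) X
  + py_of a P1 P2 X Y * Derive (fun t => y_of a t Y) X = P1.
Proof.
intros HXY HXneY.
rewrite Derive_x_of_l, (Derive_y_of_l X Y HXY).
assert (Hs : 0 < sqrt (- (X * Y))) by (apply sqrt_lt_R0; lra).
unfold px_of, py_of.
field; repeat split; lra.
Qed.

Lemma is_derive_x_of_r (X Y : R) :
  is_derive (fun t => x_of a w1 w2 X t) Y (/ (2 * a)).
Proof.
apply (is_derive_ext (fun t => x_of a w1 w2 t X)); [intro; apply x_of_sym |].
apply is_derive_x_of_l.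
Qed.

Lemma is_derive_y_of_r (X Y : R) : X * Y < 0 ->
  is_derive (fun t => y_of a X t) Y (- X / (2 * a * sqrt (- (Y * X)))).
Proof.
intros HXY; apply (is_derive_ext (fun t => y_of a t X)); [intro; apply y_of_sym |].
apply is_derive_y_of_l; lra.
Qed.

Lemma canonical_r (P1 P2 X Y : R) : X * Y < 0 -> X <> Y ->
  px_of a P1 P2 X Y * Derive (fun t => x_of a w1 w2 X t) Y
  + py_of a P1 P2 X Y * Derive (fun t => y_of a X t) Y = P2.
Proof.
intros HXY HXneY.
rewrite px_of_sym, py_of_sym by exact HXneY.
rewrite (Derive_ext (fun t => x_of a w1 w2 X t) (fun t => x_of a w1 w2 t X))
  by (intro; apply x_of_sym).
rewrite (Derive_ext (fun t => y_of a X t) (fun t => y_of a t X))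
  by (intro; apply y_of_sym).
apply canonical_l; lra.
Qed.

Section Hamiltonians.

Variables (mu P1 P2 X Y s : R).
Hypotheses (HX : X <> 0) (Hs : s <> 0) (HXY : X <> Y) (Hss : s * s = - (X * Y)).

Let Y_eq : Y = - (s * s) / X.
Proof. rewrite Hss; field; exact HX. Qed.

Let HY : Y <> 0.
Proof. intro; subst; apply Hs; nra. Qed.

Lemma H_KdV5_separated :
  H_KdV5 a w1 w2 mu (px_of a P1 P2 X Y) (2 * a * s * ((P1 - P2) / (X - Y)))
    (x_of a w1 w2 X Y) (s / a)
  = (Phi a w1 w2 mu X P1 - Phi a w1 w2 mu Y P2) / (X - Y).
Proof.
unfold H_KdV5, Phi, px_of, x_of.
generalize HY; rewrite Y_eq in HXY |- *; intro.
field; repeat split; auto; nra.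
Qed.

Lemma K_KdV5_separated :
  K_KdV5 a w1 w2 mu (px_of a P1 P2 X Y) (2 * a * s * ((P1 - P2) / (X - Y)))
    (x_of a w1 w2 X Y) (s / a)
  = (4 * X * Phi a w1 w2 mu Y P2 - 4 * Y * Phi a w1 w2 mu X P1) / (X - Y).
Proof.
unfold K_KdV5, Phi, px_of, x_of.
generalize HY; rewrite Y_eq in HXY |- *; intro.
field; repeat split; auto; nra.
Qed.

End Hamiltonians.

End ChangeOfVariables.

Theorem mainTheorem3 (a w1 w2 mu : R) (Ha : a <> 0) :
  forall P1 P2 X Y : R, X * Y < 0 -> X <> Y ->
  let x := x_of a w1 w2 X Y in
  let y := y_of a X Y in
  let px := px_of a P1 P2 X Y in
  let py := py_of a P1 P2 X Y in
  (* canonicity: px dx + py dy = P1 dX + P2 dY, written componentwise *)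
  (ex_derive (fun t => x_of a w1 w2 t Y) X /\ ex_derive (fun t => y_of a t Y) X /\
   ex_derive (fun t => x_of a w1 w2 X t) Y /\ ex_derive (fun t => y_of a X t) Y /\
   px * Derive (fun t => x_of a w1 w2 t Y) X + py * Derive (fun t => y_of a t Y) X = P1 /\
   px * Derive (fun t => x_of a w1 w2 X t) Y + py * Derive (fun t => y_of a X t) Y = P2) /\
  H_KdV5 a w1 w2 mu px py x y
    = (Phi a w1 w2 mu X P1 - Phi a w1 w2 mu Y P2) / (X - Y) /\
  K_KdV5 a w1 w2 mu px py x y
    = (4 * X * Phi a w1 w2 mu Y P2 - 4 * Y * Phi a w1 w2 mu X P1) / (X - Y) /\
  (forall E K : R,
     H_KdV5 a w1 w2 mu px py x y = E -> K_KdV5 a w1 w2 mu px py x y = K ->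
     Phi a w1 w2 mu X P1 - E * X - K / 4 = 0 /\
     Phi a w1 w2 mu Y P2 - E * Y - K / 4 = 0).
Proof.
intros P1 P2 X Y HXY HXneY x y px py.
assert (HX : X <> 0) by (intro; subst; lra).
assert (Hs : sqrt (- (X * Y)) <> 0) by (apply Rgt_not_eq, sqrt_lt_R0; lra).
assert (Hss : sqrt (- (X * Y)) * sqrt (- (X * Y)) = - (X * Y)) by (apply sqrt_sqrt; lra).
pose proof (H_KdV5_separated a w1 w2 Ha mu P1 P2 X Y _ HX Hs HXneY Hss) as EH.
pose proof (K_KdV5_separated a w1 w2 Ha mu P1 P2 X Y _ HX Hs HXneY Hss) as EK.
split; [| split; [exact EH | split; [exact EK |]]].
- repeat split.
  + eexists; apply is_derive_x_of_l; exact Ha.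
  + eexists; apply is_derive_y_of_l; assumption.
  + eexists; apply is_derive_x_of_r; exact Ha.
  + eexists; apply is_derive_y_of_r; assumption.
  + apply canonical_l; assumption.
  + apply canonical_r; assumption.
- intros E K HE HK.
  apply staeckel_separation; [exact HXneY | rewrite <- HE | rewrite <- HK]; assumption.
Qed.
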